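(* Let $V$ be a finite-dimensional real vector space, $p\ge2$, and $(P,\Omega)$ a linear Dirac structure of order $p$ on $V$ relative to $\mathbb R$. Let $L=\{(v,\omega)\in V\times\Lambda^{p-1}V^*: v\in P,\ i_v\Omega=\omega|_{\Lambda^{p-1}P}\}$ and $L^\perp=\{(Z,\eta)\in\Lambda^{p-1}V\times V^*: Z\in\Lambda^{p-1}P,\ i_Z\Omega=\eta|_P\}$, and let $\pi^*(L)\subset\Lambda^{p-1}V^*$ and $\pi^*(L^\perp)\subset V^*$ be the projections onto the second components. Then $\Lambda^{p-1}\big(\pi^*(L^\perp)\big)\subset\pi^*(L)$.
   Context: A linear Dirac structure of order $p$ on $V$ relative to $\mathbb R$ is a pair $(P,\Omega)$ where $P\subset V$ is a subspace and $\Omega\in\Lambda^pP^*$, satisfying condition (H): for all $Z_1,\dots,Z_{p-1}\in\Lambda^{p-1}P$ there exists $v\in P$ with $(i_{Z_1}\Omega)\wedge\dots\wedge(i_{Z_{p-1}}\Omega)=i_v\Omega$. Here $(i_v\Omega)(Z)=\Omega(v\wedge Z)$ for $v\in P$, $Z\in\Lambda^{p-1}P$, and $(i_Z\Omega)(w)=\Omega(Z\wedge w)$ for $w\in P$. *)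

(* Exterior algebra of V = 'rV[R]_n in coordinates w.r.t.
   the standard basis: a multivector (or, dually, a multi-covector) is a
   function on subsets S of 'I_n, S <-> e_{s1} /\ ... /\ e_{sk} (s1<...<sk). *)
From HB Require Import structures.
From mathcomp Require Import all_boot all_order all_algebra.
From mathcomp Require Import reals.
Set Implicit Arguments. Unset Strict Implicit. Unset Printing Implicit Defensive.
Import Order.TTheory GRing.Theory Num.Theory.
Local Open Scope ring_scope.

Section Exterior.
Variable R : realType.

Local Notation mv n := {ffun {set 'I_n} -> R}.

(* sign of  e_T /\ e_U = sgnw T U e_(T :|: U)  for disjoint T U *)
Definition sgnw (n : nat) (T U : {set 'I_n}) : R :=
  (-1) ^+ #|[set tu : 'I_n * 'I_n |
              [&& tu.1 \in T, tu.2 \in U & (tu.2 < tu.1)%N]]|.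

Definition wedge (n : nat) (a b : mv n) : mv n :=
  [ffun S : {set 'I_n} => \sum_(T : {set 'I_n} | T \subset S)
                sgnw T (S :\: T) * a T * b (S :\: T)].

Definition mv1 (n : nat) : mv n := [ffun S : {set 'I_n} => (S == set0)%:R].
Definition ebasis (n : nat) (S : {set 'I_n}) : mv n := [ffun T : {set 'I_n} => (T == S)%:R].

Definition vec1 (n : nat) (v : 'rV[R]_n) : mv n :=
  [ffun S : {set 'I_n} => \sum_(i : 'I_n | S == [set i]) v 0 i].

Definition wedgeF (n k : nat) (f : 'I_k -> 'rV[R]_n) : mv n :=
  foldr (fun v acc => wedge (vec1 v) acc) (mv1 n) [seq f j | j <- enum 'I_k].

Definition grade (n k : nat) (a : mv n) : Prop :=
  forall S : {set 'I_n}, #|S| != k -> a S = 0.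

(* duality pairing  Lambda^k V^* x Lambda^k V -> R
   (so that (e1/\..../\ek)(v1/\.../\vk) = det (ei(vj))) *)
Definition pair (n : nat) (a b : mv n) : R := \sum_(S : {set 'I_n}) a S * b S.

Definition ev (n : nat) (eta v : 'rV[R]_n) : R := \sum_(i < n) eta 0 i * v 0 i.

Definition spanwedge (n k : nat) (W : 'rV[R]_n -> Prop) (x : mv n) : Prop :=
  exists (m : nat) (c : 'I_m -> R) (f : 'I_m -> 'I_k -> 'rV[R]_n),
    (forall i j, W (f i j)) /\
    forall S, x S = \sum_(i < m) c i * wedgeF (f i) S.

Definition ext_sub (n k : nat) (P : {vspace 'rV[R]_n}) (Z : mv n) : Prop :=
  spanwedge k (fun v => v \in P) Z.

Definition iv (n : nat) (Omega : mv n) (v : 'rV[R]_n) : mv n :=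
  [ffun S : {set 'I_n} => pair Omega (wedge (vec1 v) (ebasis S))].

Definition iZ (n : nat) (Omega Z : mv n) : 'rV[R]_n :=
  \row_i pair Omega (wedge Z (vec1 (delta_mx 0 i))).

Definition eq_on (n k : nat) (P : {vspace 'rV[R]_n}) (a b : mv n) : Prop :=
  forall Y, ext_sub k P Y -> pair a Y = pair b Y.

(* Omega : an element of Lambda^p V^* representing (by restriction) an
   element of Lambda^p P^*; every element of Lambda^p P^* arises this way,
   and all notions below only depend on the restriction. *)
Definition condH (n p : nat) (P : {vspace 'rV[R]_n}) (Omega : mv n) : Prop :=
  forall Zs : 'I_(p.-1) -> mv n,
    (forall j, ext_sub p.-1 P (Zs j)) ->
    exists2 v, v \in P &
      eq_on p.-1 P (wedgeF (fun j => iZ Omega (Zs j))) (iv Omega v).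

Definition linear_Dirac (n p : nat) (P : {vspace 'rV[R]_n}) (Omega : mv n) : Prop :=
  grade p Omega /\ condH p P Omega.

Definition piL (n p : nat) (P : {vspace 'rV[R]_n}) (Omega : mv n) (w : mv n) : Prop :=
  grade p.-1 w /\ exists2 v, v \in P & eq_on p.-1 P (iv Omega v) w.

Definition piLperp (n p : nat) (P : {vspace 'rV[R]_n}) (Omega : mv n)
    (eta : 'rV[R]_n) : Prop :=
  exists2 Z, ext_sub p.-1 P Z &
    forall w, w \in P -> ev (iZ Omega Z) w = ev eta w.

End Exterior.

(* Write Lambda P for the subalgebra of Lambda V generated by P.  The
   contraction i_theta by a covector theta is adjoint to left wedging with
   theta, is an antiderivation, hence maps Lambda P into itself, and on
   Lambda P it only depends on the restriction of theta to P.  By induction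
   on the number of factors, the pairing of eta_1 /\ ... /\ eta_k with an
   element of Lambda P thus only depends on the restrictions eta_j|_P.
   Hence if each eta_j agrees on P with i_{Z_j} Omega, then eta_1 /\ ... /\
   eta_{p-1} agrees on Lambda^{p-1} P with the wedge of the i_{Z_j} Omega,
   which by condition (H) is some i_v Omega; linearity of v |-> i_v Omega
   handles linear combinations of such wedges. *)
From HB Require Import structures.
From mathcomp Require Import all_boot all_order all_algebra.
From mathcomp Require Import reals ring.
From Stdlib Require Import IndefiniteDescription.
Set Implicit Arguments. Unset Strict Implicit. Unset Printing Implicit Defensive.
Import Order.TTheory GRing.Theory Num.Theory.
Local Open Scope ring_scope.

Lemma nth_map_ord_enum (T : Type) k (f : 'I_k -> T) x0 (o : 'I_k) :
  nth x0 [seq f j | j <- enum 'I_k] o = f o.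
Proof. by rewrite (nth_map o) ?size_enum_ord // nth_ord_enum. Qed.

Section ExteriorAlgebra.
Variables (R : realType) (n : nat).
Local Notation mv := {ffun {set 'I_n} -> R}.
Implicit Types (i j : 'I_n) (S T U A : {set 'I_n}) (B Y : mv) (u v x y th : 'rV[R]_n).

Definition mvscale (a : R) B : mv := [ffun S => a * B S].

Lemma wedge_vec1E u B S :
  wedge (vec1 u) B S = \sum_(j in S) sgnw R [set j] (S :\ j) * u 0 j * B (S :\ j).
Proof.
rewrite ffunE.
under eq_bigr => T _ do rewrite ffunE big_distrr big_distrl /=.
rewrite (exchange_big_dep predT) //= [RHS]big_mkcond /=; apply: eq_bigr => i _.
rewrite (eq_bigl (fun T => (T == [set i]) && (T \subset S))); last first.
  by move=> T; rewrite andbC.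
by rewrite big_mkcondr /= big_pred1_eq -sub1set.
Qed.

Lemma sgnw_set1 i U : sgnw R [set i] U = (-1) ^+ #|[set b in U | (b < i)%N]|.
Proof.
have inj_pair : injective (fun b : 'I_n => (i, b)) by move=> x y [].
rewrite /sgnw -(card_imset _ inj_pair); congr (_ ^+ _); apply: eq_card => -[a b].
rewrite !inE /=; apply/idP/imsetP => [/and3P[/eqP-> bU lt] | [c]].
  by exists b; rewrite // inE bU.
by rewrite inE => /andP[cU lt] [-> ->]; rewrite eqxx cU lt.
Qed.

Lemma sgnw_sqr T U : sgnw R T U * sgnw R T U = 1.
Proof. by rewrite -exprMn mulrNN mul1r expr1n. Qed.

Lemma card_lt_setU1 i j A : j \notin A ->
  #|[set b in j |: A | (b < i)%N]| = (#|[set b in A | (b < i)%N]| + (j < i))%N.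
Proof.
move=> jA; case: (ltnP j i) => ji.
  have -> : [set b in j |: A | (b < i)%N] = j |: [set b in A | (b < i)%N].
    by apply/setP => b; rewrite !inE; case: (eqVneq b j) => [->|]; rewrite ?ji.
  by rewrite cardsU1 inE (negPf jA) addnC.
have -> : [set b in j |: A | (b < i)%N] = [set b in A | (b < i)%N].
  apply/setP => b; rewrite !inE.
  by case: (eqVneq b j) => [->|] //=; rewrite ltnNge ji andbF.
by rewrite addn0.
Qed.

Lemma sgnw_swap i j A : i != j -> i \notin A -> j \notin A ->
  sgnw R [set i] (j |: A) * sgnw R [set j] (i |: A) =
  - (sgnw R [set j] A * sgnw R [set i] A).
Proof.
move=> ij iA jA; rewrite !sgnw_set1 !card_lt_setU1 // !exprD.
case: (ltngtP i j) => [lt|lt|/val_inj eq_ij]; last by rewrite eq_ij eqxx in ij.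
  by rewrite /= expr1 expr0; ring.
by rewrite /= expr1 expr0; ring.
Qed.

Lemma setU1D1 i j T : i != j -> (i |: T) :\ j = i |: (T :\ j).
Proof.
move=> ij; apply/setP => k; rewrite !inE.
by case: (eqVneq k j) => [->|] //=; rewrite eq_sym (negPf ij).
Qed.

Lemma sgnw_exchange i j T : i \notin T -> j \in T ->
  sgnw R [set i] T * sgnw R [set j] (i |: (T :\ j)) =
  - (sgnw R [set j] (T :\ j) * sgnw R [set i] (T :\ j)).
Proof.
move=> iT jT; have ij : i != j by apply: contraNneq iT => ->.
rewrite -{1}(setD1K jT) sgnw_swap // !inE ?eqxx ?(negPf iT) ?andbF //.
Qed.

Definition contract th B : mv :=
  [ffun T : {set 'I_n} => \sum_(i : 'I_n | i \notin T) sgnw R [set i] T * th 0 i * B (i |: T)].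

Lemma pair_wedge_vec1 th B Y : pair (wedge (vec1 th) B) Y = pair B (contract th Y).
Proof.
rewrite /pair.
under eq_bigr => S _ do rewrite wedge_vec1E big_distrl /=.
under [RHS]eq_bigr => U _ do rewrite ffunE big_distrr /=.
rewrite (exchange_big_dep predT) //= [RHS](exchange_big_dep predT) //=.
apply: eq_bigr => j _.
rewrite (reindex_onto (fun U => j |: U) (fun S => S :\ j)); last first.
  by move=> S jS; rewrite setD1K.
apply: eq_big => [U|U /andP[_ /eqP <-]].
  rewrite setU11 /=; apply/eqP/idP => [<-|jU]; first by rewrite !inE eqxx.
  by rewrite setU1K.
by rewrite setD1K ?setU11 //; ring.
Qed.

Lemma contract_wedge_vec1_at th u B T :
  contract th (wedge (vec1 u) B) T = ev th u * B T - wedge (vec1 u) (contract th B) T.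
Proof.
have wedge_setU1 i : i \notin T -> wedge (vec1 u) B (i |: T) =
    sgnw R [set i] T * u 0 i * B T +
    \sum_(j in T) sgnw R [set j] ((i |: T) :\ j) * u 0 j * B ((i |: T) :\ j).
  by move=> iT; rewrite wedge_vec1E (big_setU1 _ iT) /= setU1K.
have contract_setD1 j : j \in T -> contract th B (T :\ j) =
    sgnw R [set j] (T :\ j) * th 0 j * B T +
    \sum_(i | i \notin T) sgnw R [set i] (T :\ j) * th 0 i * B (i |: (T :\ j)).
  move=> jT; rewrite ffunE (bigD1 j) /=; last by rewrite !inE eqxx.
  rewrite setD1K //; congr (_ + _); apply: eq_bigl => i.
  by rewrite !inE; case: (eqVneq i j) => [->|]; rewrite ?eqxx ?jT /= ?andbT.
(* the cross terms of the two sides cancel pairwise *)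
have cross i j : i \notin T -> j \in T ->
    sgnw R [set i] T * th 0 i * (sgnw R [set j] ((i |: T) :\ j) * u 0 j * B ((i |: T) :\ j))
    = - (sgnw R [set j] (T :\ j) * u 0 j *
         (sgnw R [set i] (T :\ j) * th 0 i * B (i |: (T :\ j)))).
  move=> iT jT; have ij : i != j by apply: contraNneq iT => ->.
  rewrite setU1D1 //.
  transitivity (sgnw R [set i] T * sgnw R [set j] (i |: (T :\ j)) * th 0 i * u 0 j *
                B (i |: (T :\ j))); first ring.
  by rewrite sgnw_exchange //; ring.
have regroup (a1 a2 c1 c2 d1 d2 : R) :
  a1 = c2 -> d1 = c1 -> a2 = - d2 -> a1 + a2 = c1 + c2 - (d1 + d2).
  by move=> -> -> ->; ring.
have sgnw_cancel k U (a b c : R) :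
    sgnw R [set k] U * a * (sgnw R [set k] U * b * c) = a * b * c.
  by rewrite -[RHS]mul1r -(sgnw_sqr [set k] U); ring.
rewrite ffunE wedge_vec1E /ev big_distrl [in RHS](bigID (mem T)) /=.
under eq_bigr => i iT do rewrite wedge_setU1 // mulrDr.
under [X in _ = _ - X]eq_bigr => j jT do rewrite contract_setD1 // mulrDr.
rewrite !big_split /=; apply: regroup.
- by apply: eq_bigr => i _; rewrite sgnw_cancel.
- by apply: eq_bigr => i _; rewrite sgnw_cancel; ring.
- under eq_bigr => i iT do rewrite big_distrr.
  rewrite exchange_big -sumrN; apply: eq_bigr => j jT.
  by rewrite big_distrr -sumrN; apply: eq_bigr => i iT; exact: cross.
Qed.

Lemma contract_wedge_vec1 th u B :
  contract th (wedge (vec1 u) B) = mvscale (ev th u) B - wedge (vec1 u) (contract th B).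
Proof. by apply/ffunP => T; rewrite contract_wedge_vec1_at !ffunE. Qed.

Lemma contract_mv1 th : contract th (mv1 R n) = 0.
Proof.
apply/ffunP => T; rewrite !ffunE big1 // => i _; rewrite ffunE.
by case: eqP => [/setP/(_ i)|_]; rewrite ?mulr0 // !inE eqxx.
Qed.

Lemma contract0 th : contract th 0 = 0.
Proof. by apply/ffunP => T; rewrite !ffunE big1 // => i _; rewrite ffunE mulr0. Qed.

Lemma contractD th Y1 Y2 : contract th (Y1 + Y2) = contract th Y1 + contract th Y2.
Proof.
apply/ffunP => T; rewrite !ffunE -big_split; apply: eq_bigr => i _.
by rewrite ffunE mulrDr.
Qed.

Lemma contractZ th a Y : contract th (mvscale a Y) = mvscale a (contract th Y).
Proof.
apply/ffunP => T; rewrite !ffunE big_distrr; apply: eq_bigr => i _.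
by rewrite ffunE mulrCA.
Qed.

Lemma mvscaleN1 B : mvscale (-1) B = - B.
Proof. by apply/ffunP => S; rewrite !ffunE mulN1r. Qed.

Definition wedgeL (s : seq 'rV[R]_n) : mv :=
  foldr (fun v acc => wedge (vec1 v) acc) (mv1 R n) s.

Lemma wedgeF_wedgeL k (f : 'I_k -> 'rV[R]_n) : wedgeF f = wedgeL [seq f o | o <- enum 'I_k].
Proof. by []. Qed.

Lemma grade_wedgeL (s : seq 'rV[R]_n) : grade (size s) (wedgeL s).
Proof.
elim: s => [|a s IH] S /= hS.
  by rewrite ffunE; case: eqP => // S0; rewrite S0 cards0 in hS.
rewrite wedge_vec1E big1 // => j jS; rewrite IH ?mulr0 //.
by apply: contra hS => /eqP cardS; rewrite (cardsD1 j S) jS cardS.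
Qed.

Lemma grade_wedgeF k (f : 'I_k -> 'rV[R]_n) : grade k (wedgeF f).
Proof. by have := @grade_wedgeL [seq f o | o <- enum 'I_k]; rewrite size_map size_enum_ord. Qed.

Lemma mv_lincombE m (c : 'I_m -> R) (A : 'I_m -> mv) (x : mv) :
  (forall S, x S = \sum_(i < m) c i * A i S) -> x = \sum_(i < m) mvscale (c i) (A i).
Proof.
by move=> xE; apply/ffunP => S; rewrite xE sum_ffunE; apply: eq_bigr => i _; rewrite ffunE.
Qed.

Inductive in_ext (P : {vspace 'rV[R]_n}) : mv -> Prop :=
| in_ext1 : in_ext P (mv1 R n)
| in_ext_wedge u Y : u \in P -> in_ext P Y -> in_ext P (wedge (vec1 u) Y)
| in_ext0 : in_ext P 0
| in_extD Y1 Y2 : in_ext P Y1 -> in_ext P Y2 -> in_ext P (Y1 + Y2)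
| in_extZ a Y : in_ext P Y -> in_ext P (mvscale a Y).

Section Subspace.
Variable P : {vspace 'rV[R]_n}.

Lemma contract_in_ext th Y : in_ext P Y -> in_ext P (contract th Y).
Proof.
elim=> [|u Y' uP PY' IH||Y1 Y2 _ IH1 _ IH2|a Y' _ IH].
- by rewrite contract_mv1; apply: in_ext0.
- rewrite contract_wedge_vec1 -mvscaleN1.
  by apply: in_extD; apply: in_extZ => //; apply: in_ext_wedge.
- by rewrite contract0; apply: in_ext0.
- by rewrite contractD; apply: in_extD.
- by rewrite contractZ; apply: in_extZ.
Qed.

Lemma eq_contract_in_ext th th' Y :
  {in P, ev th =1 ev th'} -> in_ext P Y -> contract th Y = contract th' Y.
Proof.
move=> eq_th; elim=> [|u Y' uP _ IH||Y1 Y2 _ IH1 _ IH2|a Y' _ IH].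
- by rewrite !contract_mv1.
- by rewrite !contract_wedge_vec1 eq_th // IH.
- by rewrite !contract0.
- by rewrite !contractD IH1 IH2.
- by rewrite !contractZ IH.
Qed.

Lemma pair_wedgeL_in_ext (s s' : seq 'rV[R]_n) Y : in_ext P Y ->
  size s = size s' -> (forall k, {in P, ev (nth 0 s k) =1 ev (nth 0 s' k)}) ->
  pair (wedgeL s) Y = pair (wedgeL s') Y.
Proof.
elim: s s' Y => [|a s IH] [|a' s'] //= Y PY [size_s] eq_ss'.
rewrite !pair_wedge_vec1 (eq_contract_in_ext (eq_ss' 0%N) PY).
by apply: IH => [|//|k]; [apply: contract_in_ext | apply: (eq_ss' k.+1)].
Qed.

Lemma in_ext_wedgeL (s : seq 'rV[R]_n) : {subset s <= P} -> in_ext P (wedgeL s).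
Proof.
elim: s => [|a s IH] /= sP; first exact: in_ext1.
apply: in_ext_wedge; first by apply: sP; rewrite inE eqxx.
by apply: IH => v vs; apply: sP; rewrite inE vs orbT.
Qed.

Lemma ext_sub_in_ext k Y : ext_sub k P Y -> in_ext P Y.
Proof.
move=> [m [c [f [fP /mv_lincombE ->]]]].
elim/big_rec: _ => [|i x _ Px]; first exact: in_ext0.
apply: in_extD => //; apply: in_extZ; apply: in_ext_wedgeL => v /mapP[j _ ->].
exact: fP.
Qed.

Lemma eq_on_wedgeF k (eta eta' : 'I_k -> 'rV[R]_n) :
  (forall j : 'I_k, {in P, ev (eta j) =1 ev (eta' j)}) ->
  eq_on k P (wedgeF eta) (wedgeF eta').
Proof.
move=> eq_eta Y /ext_sub_in_ext PY.
rewrite !wedgeF_wedgeL; apply: (pair_wedgeL_in_ext PY); first by rewrite !size_map.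
move=> i w wP; have [ik | ki] := ltnP i k.
  by rewrite -[i]/(nat_of_ord (Ordinal ik)) !nth_map_ord_enum eq_eta.
by rewrite !nth_default // size_map size_enum_ord.
Qed.

End Subspace.

Lemma pair_lincombl m (c : 'I_m -> R) (A : 'I_m -> mv) (x : mv) Y :
  (forall S, x S = \sum_(i < m) c i * A i S) ->
  pair x Y = \sum_(i < m) c i * pair (A i) Y.
Proof.
move=> xE; rewrite /pair; under eq_bigr => S _ do rewrite xE big_distrl /=.
rewrite exchange_big; apply: eq_bigr => i _; rewrite big_distrr.
by apply: eq_bigr => S _ /=; rewrite mulrA.
Qed.

Lemma wedge_vec1_scaleD a x y B T :
  wedge (vec1 (a *: x + y)) B T = a * wedge (vec1 x) B T + wedge (vec1 y) B T.
Proof.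
rewrite !wedge_vec1E big_distrr -big_split; apply: eq_bigr => j _.
by rewrite !mxE /=; ring.
Qed.

Lemma iv_scaleD (Om : mv) a x y S : iv Om (a *: x + y) S = a * iv Om x S + iv Om y S.
Proof.
rewrite !ffunE /pair big_distrr -big_split; apply: eq_bigr => T _ /=.
by rewrite wedge_vec1_scaleD; ring.
Qed.

Lemma pair_iv_lincomb (Om Y : mv) m (c : 'I_m -> R) (v : 'I_m -> 'rV[R]_n) :
  pair (iv Om (\sum_(i < m) c i *: v i)) Y = \sum_(i < m) c i * pair (iv Om (v i)) Y.
Proof.
apply: pair_lincombl => S; elim/big_rec2: _ => [|i z1 z2 _ <-]; last exact: iv_scaleD.
rewrite !ffunE /pair big1 // => T _; rewrite wedge_vec1E big1 ?mulr0 // => j _.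
by rewrite mxE mulr0 mul0r.
Qed.

Lemma wedgeF_piLperp p P (Om : mv) (eta : 'I_p.-1 -> 'rV[R]_n) :
  condH p P Om -> (forall j : 'I_p.-1, piLperp p P Om (eta j)) ->
  exists2 v, v \in P & eq_on p.-1 P (wedgeF eta) (iv Om v).
Proof.
move=> condH_Om eta_perp.
have /functional_choice[Z hZ] : forall j : 'I_p.-1,
    exists Z, ext_sub p.-1 P Z /\ {in P, ev (iZ Om Z) =1 ev (eta j)}.
  by move=> j; have [Z ? ?] := eta_perp j; exists Z.
have [v vP eq_v] := condH_Om Z (fun o => proj1 (hZ o)).
exists v => // Y PY; rewrite -eq_v //.
by apply: eq_on_wedgeF PY => j w wP; rewrite (proj2 (hZ j)).
Qed.

End ExteriorAlgebra.

Theorem lemma4p4 (R : realType) (n p : nat) (P : {vspace 'rV[R]_n})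
    (Omega : {ffun {set 'I_n} -> R}) :
  (2 <= p)%N -> linear_Dirac p P Omega ->
  forall w : {ffun {set 'I_n} -> R}, spanwedge p.-1 (piLperp p P Omega) w -> piL p P Omega w.
Proof.
move=> _ [_ condH_Om] w [m [c [f [f_perp wE]]]]; split.
  by move=> S hS; rewrite wE big1 // => i _; rewrite grade_wedgeF ?mulr0.
have /functional_choice[v hv] : forall i : 'I_m,
    exists v, v \in P /\ eq_on p.-1 P (wedgeF (f i)) (iv Omega v).
  by move=> i; have [v ? ?] := wedgeF_piLperp condH_Om (f_perp i); exists v.
exists (\sum_(i < m) c i *: v i).
  by apply: rpred_sum => i _; apply: rpredZ; apply: (proj1 (hv i)).
move=> Y PY; rewrite pair_iv_lincomb (pair_lincombl _ wE).
by apply: eq_bigr => i _; rewrite (proj2 (hv i)).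
Qed.
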